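(* For each prime power $q$, there exists an $[n,3]_q$ MWS code with $n\le\frac{q-1}{2}\left(q^3+q^2+q\right)$.
   Context: An $[n,k]_q$ code is a $k$-dimensional subspace of $\mathbb{F}_q^n$, non-degenerate (no coordinate identically zero on the code). It is MWS if the set of its non-zero Hamming weights has cardinality $\frac{q^k-1}{q-1}$. *)

From HB Require Import structures.
From mathcomp Require Import all_boot all_order all_algebra finalg.
Set Implicit Arguments. Unset Strict Implicit. Unset Printing Implicit Defensive.
Import GRing.Theory.
Local Open Scope ring_scope.

(* Linear codes over a finite field F: a code of length n is a subspace
   C : {vspace 'rV[F]_n}; it is an [n,k]_q code when \dim C = k and #|F| = q. *)

Definition wt (F : finFieldType) (n : nat) (v : 'rV[F]_n) : nat :=
  #|[set i : 'I_n | v 0 i != 0]|.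

Definition nondeg_code (F : finFieldType) (n : nat) (C : {vspace 'rV[F]_n}) : Prop :=
  forall i : 'I_n, exists2 v, v \in C & v 0 i != 0.

Definition nonzero_weights (F : finFieldType) (n : nat) (C : {vspace 'rV[F]_n})
  : seq nat :=
  undup [seq wt v | v <- enum 'rV[F]_n & (v \in C) && (v != 0)].

Definition MWS (F : finFieldType) (n : nat) (C : {vspace 'rV[F]_n}) : Prop :=
  size (nonzero_weights C) = ((#|F| ^ (\dim C)%N - 1) %/ (#|F| - 1))%N.

(* The code is the projective system of a multiset of points of PG(2, q).  Let r be a
   bijection from F onto {0, ..., q - 1} with r 0 = q/2 and r (-1) = 0, and take the
   point (0:0:1) with multiplicity q^2, (1:0:c) with multiplicity r c, (0:1:c) with
   multiplicity q r c and (1:c:0), c <> 0, with multiplicity q^2 r c.  A codeword is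
   x |-> (x . p)_p, and its weight is the length minus the number N(x) of points on the
   line x.  For x2 <> 0 the base-q digits of N(x) are r(-x0/x2), r(-x1/x2) and a high
   digit, so they recover the line; for x2 = 0, N(x) is q^2 + T, q^2 + q T or
   q^2 (1 + r(-x0/x1)), where T = q(q-1)/2 is the sum of r.  The choice of r 0 and r (-1)
   makes the low digits of these values those of affine lines with high digit 0, so
   distinct lines have distinct N, i.e. codewords of equal weight are proportional and
   there are exactly q^2 + q + 1 weights. *)

From HB Require Import structures.
From mathcomp Require Import all_boot all_order all_algebra all_fingroup finfield.
From mathcomp Require Import zify.
Set Implicit Arguments. Unset Strict Implicit. Unset Printing Implicit Defensive.
Import GRing.Theory.

Lemma size_undup_map_uniform (T U : eqType) (f : T -> U) (s : seq T) (m : nat) :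
  {in s, forall x, count (fun y => f y == f x) s = m} ->
  size (undup (map f s)) * m = size s.
Proof.
move=> fiber; have := big_undup_iterop_count addn (map f s) predT (fun=> 1).
rewrite sum1_size size_map => <-.
rewrite mulnC -iter_addn_0 -[size _]count_predT -big_const_seq.
rewrite big_seq [RHS]big_seq; apply: eq_bigr => w.
rewrite mem_undup => /mapP [x xs ->]; rewrite count_map [count _ s]fiber //.
by case: m {fiber} => // k; rewrite iteropS iter_addn mul1n addn1.
Qed.

Lemma card_count_enum (T : finType) (P : pred T) : #|P| = count P (enum T).
Proof. by rewrite cardE -size_filter enumT /enum_mem. Qed.

Section MWSCriterion.
Variables (F : finFieldType) (n : nat).
Local Open Scope ring_scope.

Lemma wt0 : wt (0 : 'rV[F]_n) = 0%N.
Proof. by apply: eq_card0 => i; rewrite !inE mxE eqxx. Qed.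

Lemma wt_scale (l : F) (v : 'rV[F]_n) : l != 0 -> wt (l *: v) = wt v.
Proof. by move=> l0; apply: eq_card => i; rewrite !inE mxE mulf_eq0 negb_or l0. Qed.

Lemma card_nonzero_multiples (v : 'rV[F]_n) :
  v != 0 -> #|[set l *: v | l in [set~ 0]]| = (#|F| - 1)%N.
Proof.
move=> v0; rewrite card_imset ?cardsC1 ?subn1 // => a b /eqP.
by rewrite -subr_eq0 -scalerBl scaler_eq0 (negbTE v0) orbF subr_eq0 => /eqP.
Qed.

Lemma MWS_of_proportional_equal_weights (C : {vspace 'rV[F]_n}) :
  {in C &, forall u v, u != 0 -> v != 0 -> wt u = wt v -> exists l, v = l *: u} ->
  MWS C.
Proof.
move=> prop; set s := [seq v <- enum 'rV[F]_n | (v \in C) && (v != 0)].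
have size_s : size s = (#|F| ^ \dim C - 1)%N.
  rewrite -card_vspace (cardD1 0) mem0v add1n subSS subn0 size_filter -card_count_enum.
  by apply: eq_card => v; rewrite !inE andbC.
have fiber : {in s, forall v, count (fun u => wt u == wt v) s = #|F| - 1}%N.
  move=> v; rewrite mem_filter => /andP [/andP [Cv v0] _].
  rewrite count_filter -card_count_enum -(card_nonzero_multiples v0).
  apply: eq_card => u; rewrite !inE; apply/and3P/imsetP => [[/eqP wuv Cu u0]|[l]].
  - have [l ul] := prop v u Cv Cu v0 u0 (esym wuv); exists l => //.
    by rewrite !inE; apply: contraNneq u0 => l0; rewrite ul l0 scale0r.
  - rewrite !inE => l0 ->.
    by rewrite wt_scale // memvZ // scaler_eq0 negb_or l0 v0.
rewrite /MWS /nonzero_weights -/s -size_s -(size_undup_map_uniform fiber) mulnK //.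
by rewrite subn_gt0 finNzRing_gt1.
Qed.

End MWSCriterion.

Section GeneratorMatrix.
Variables (F : finFieldType) (k : nat) (s : seq 'cV[F]_k).
Local Open Scope ring_scope.

Definition genmx : 'M[F]_(k, size s) := \matrix_(i < k, j < size s) nth 0 s j i 0.

Definition genmap : 'Hom('rV[F]_k, 'rV[F]_(size s)) := linfun (mulmxr genmx).

Definition gencode : {vspace 'rV[F]_(size s)} := limg genmap.

Definition orth_count (x : 'rV[F]_k) : nat := count (fun p => (x *m p) 0 0 == 0) s.

Lemma mulmx_genmx (x : 'rV[F]_k) (j : 'I_(size s)) :
  (x *m genmx) 0 j = (x *m nth 0 s j) 0 0.
Proof. by rewrite !mxE; apply: eq_bigr => i _; rewrite mxE. Qed.

Lemma orth_count0 : orth_count 0 = size s.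
Proof. by rewrite -count_predT; apply: eq_count => p; rewrite mul0mx mxE eqxx. Qed.

Lemma wt_genmx (x : 'rV[F]_k) : wt (x *m genmx) = (size s - orth_count x)%N.
Proof.
rewrite -[X in (X - _)%N](count_predC (fun p => (x *m p) 0 0 == 0) s) addKn /wt.
rewrite cardsE -sum1_card -sum1_count (big_nth 0) big_mkord.
by apply: eq_bigl => j; rewrite unfold_in mulmx_genmx.
Qed.

Lemma gencodeP v : reflect (exists x, v = x *m genmx) (v \in gencode).
Proof.
by apply: (iffP memv_imgP) => [[x _ ->]|[x ->]]; exists x; rewrite ?memvf ?lfunE.
Qed.

Lemma dim_gencode :
  (forall x : 'rV[F]_k, x != 0 -> (orth_count x < size s)%N) -> \dim gencode = k.
Proof.
move=> lt_size; have genmap_inj : injective genmap.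
  move=> x y; rewrite !lfunE /= => xyG; apply/eqP; rewrite -subr_eq0.
  apply/negPn/negP => /lt_size; rewrite -subn_gt0 -wt_genmx mulmxBl xyG subrr.
  by rewrite wt0.
rewrite /gencode limg_dim_eq; first by rewrite dimvf dim_matrix mul1r.
by move/lker0P: genmap_inj => /eqP ->; rewrite capv0.
Qed.

Lemma nondeg_gencode : 0 \notin s -> nondeg_code gencode.
Proof.
move=> s0 j; set p := nth 0 s j.
have p0 : p != 0 by apply: contraNneq s0 => <-; apply: mem_nth.
have [i pi0] : exists i, p i 0 != 0.
  case: (pickP (fun i => p i 0 != 0)) => [i pi0 | none]; first by exists i.
  by case/eqP: p0; apply/matrixP => i l; rewrite ord1 mxE; apply/eqP/negbFE/none.
exists (delta_mx 0 i *m genmx); first by apply/gencodeP; exists (delta_mx 0 i).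
by rewrite mulmx_genmx -rowE mxE.
Qed.

Lemma MWS_gencode :
  (forall x y : 'rV[F]_k, x != 0 -> y != 0 -> orth_count x = orth_count y ->
     exists l, y = l *: x) ->
  MWS gencode.
Proof.
move=> sep; apply: MWS_of_proportional_equal_weights.
move=> _ _ /gencodeP [x ->] /gencodeP [y ->] xG0 yG0.
have x0 : x != 0 by apply: contraNneq xG0 => ->; rewrite mul0mx.
have y0 : y != 0 by apply: contraNneq yG0 => ->; rewrite mul0mx.
rewrite !wt_genmx => /(congr1 (subn (size s))); rewrite !subKn ?count_size // => eq_xy.
by have [l ->] := sep x y x0 y0 eq_xy; exists l; rewrite scalemxAl.
Qed.

End GeneratorMatrix.

Lemma eq_digits (q a b a' b' : nat) : a < q -> a' < q ->
  a + q * b = a' + q * b' -> a = a' /\ b = b'.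
Proof.
move=> lt_a lt_a' eq_ab; have q_gt0 : 0 < q by lia.
have := congr1 (modn^~ q) eq_ab; have := congr1 (divn^~ q) eq_ab => /=.
rewrite ![q * _]mulnC ![_ + _ * q]addnC !modnMDl !divnMDl //.
by rewrite !modn_small // !divn_small // !addn0.
Qed.

Lemma eq_digits3 (q a b c a' b' c' : nat) : a < q -> b < q -> a' < q -> b' < q ->
  a + q * (b + q * c) = a' + q * (b' + q * c') -> [/\ a = a', b = b' & c = c'].
Proof.
move=> lt_a lt_b lt_a' lt_b' /(eq_digits lt_a lt_a') [-> /(eq_digits lt_b lt_b')].
by case=> -> ->.
Qed.

Definition block (I : finType) (T : Type) (m : I -> nat) (p : I -> T) : seq T :=
  flatten [seq nseq (m i) (p i) | i <- enum I].

Lemma count_block (I : finType) (T : Type) (P : pred T) (m : I -> nat) (p : I -> T) :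
  count P (block m p) = \sum_i m i * P (p i).
Proof.
rewrite count_flatten sumnE !big_map [index_enum _]unlock.
by apply: eq_bigr => i _; rewrite count_nseq mulnC.
Qed.

Definition i0 : 'I_3 := ord0.
Definition i1 : 'I_3 := lift ord0 ord0.
Definition i2 : 'I_3 := ord_max.

Section Coordinates.
Variable F : fieldType.
Local Open Scope ring_scope.

Definition col3 (a b c : F) : 'cV[F]_3 := \col_i [:: a; b; c]`_i.

Lemma mulmx_col3 (x : 'rV[F]_3) a b c :
  (x *m col3 a b c) 0 0 = x ord0 i0 * a + x ord0 i1 * b + x ord0 i2 * c.
Proof.
rewrite !mxE !big_ord_recl big_ord0 !mxE addr0 addrA.
by congr (_ * _ + _ * _ + _ * _); congr (x 0 _); apply: val_inj.
Qed.

Lemma col3_eq0 a b c : (col3 a b c == 0) = [&& a == 0, b == 0 & c == 0].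
Proof.
apply/eqP/and3P => [/matrixP abc0 | [/eqP-> /eqP-> /eqP->]].
  by move: (abc0 i0 0) (abc0 i1 0) (abc0 i2 0); rewrite !mxE /= => -> -> ->.
by apply/matrixP => -[[|[|[|i]]] lt_i] j; rewrite !mxE.
Qed.

Lemma row3_scale (l : F) (x y : 'rV[F]_3) :
  y ord0 i0 = l * x ord0 i0 -> y ord0 i1 = l * x ord0 i1 -> y ord0 i2 = l * x ord0 i2 ->
  y = l *: x.
Proof.
move=> y0 y1 y2; apply/rowP => -[[|[|[|i]]] lt_i] //; rewrite mxE.
- by rewrite (_ : Ordinal lt_i = i0) //; apply: val_inj.
- by rewrite (_ : Ordinal lt_i = i1) //; apply: val_inj.
- by rewrite (_ : Ordinal lt_i = i2) //; apply: val_inj.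
Qed.

End Coordinates.

Section RootWeight.
Variable F : finFieldType.

Definition root_weight (f : F -> nat) (a b : F) : nat := \sum_c f c * (a + b * c == 0)%R.

Lemma root_weight_unit f a b : (b != 0)%R -> root_weight f a b = f (- a / b)%R.
Proof.
move=> b0; have root_eq c : (a + b * c == 0)%R = (c == - a / b)%R.
  by rewrite addrC addr_eq0 -[c == _](inj_eq (mulfI b0)) [(b * (_ / b))%R]mulrC divfK.
rewrite /root_weight (bigD1 (- a / b)%R) //= root_eq eqxx muln1 big1 ?addn0 // => c.
by rewrite root_eq => /negbTE ->; rewrite muln0.
Qed.

Lemma root_weight_const f a : root_weight f a 0%R = (a == 0)%R * \sum_c f c.
Proof. by rewrite mulnC big_distrl; apply: eq_bigr => c _; rewrite mul0r addr0. Qed.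

Lemma root_weight_le f a b : root_weight f a b <= \sum_c f c.
Proof. by apply: leq_sum => c _; case: eqP; rewrite ?muln0 ?muln1. Qed.

End RootWeight.

Lemma exists_injection_with_values (T : finType) (a b : T) (i k : 'I_#|T|) :
  a != b -> i != k -> exists f : T -> 'I_#|T|, [/\ injective f, f a = i & f b = k].
Proof.
move=> ab ik; pose t1 := tperm (enum_rank a) i; pose t2 := tperm (t1 (enum_rank b)) k.
have t1b : t1 (enum_rank b) != i.
  by rewrite -[i](tpermL (enum_rank a)) -/t1 (inj_eq perm_inj) (inj_eq enum_rank_inj) eq_sym.
exists (fun c => (t1 * t2)%g (enum_rank c)); split.
- by move=> c d /perm_inj /enum_rank_inj.
- by rewrite permM tpermL tpermD // eq_sym.
- by rewrite permM tpermL.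
Qed.

Section Construction.
Variable F : finFieldType.
Local Notation q := #|F|.

Lemma q_gt1 : 1 < q.
Proof. exact: finNzRing_gt1. Qed.

Lemma half_q_gt0 : 0 < q./2.
Proof. by have := q_gt1; case: q => [|[|k]]. Qed.

Lemma half_q_lt : q./2 < q.
Proof. by rewrite -divn2 ltn_Pdiv // (ltn_trans _ q_gt1). Qed.

Variable r : F -> nat.
Hypotheses (r_inj : injective r) (r_lt : forall c, r c < q).
Hypotheses (r0 : r 0%R = q./2) (rN1 : r (-1)%R = 0).

(* The point (1:0:0) already occurs in the block (1:0:c). *)
Definition r_nz (c : F) : nat := (c != 0)%R * r c.

Definition cols : seq 'cV[F]_3 :=
  nseq (q ^ 2) (col3 0 0 1)%R ++ block r (col3 1 0)%R ++
  block (fun c => q * r c) (col3 0 1)%R ++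
  block (fun c => q ^ 2 * r_nz c) (fun c => col3 1 c 0)%R.

Local Notation T := (\sum_c r c).

Lemma sum_r : T * 2 = q * q.-1.
Proof.
pose h c : 'I_q := Ordinal (r_lt c).
have h_bij : bijective h.
  by apply: inj_card_bij; [move=> a b /(congr1 val)/r_inj | rewrite card_ord].
have -> : T = \sum_(i < q) i by rewrite (reindex h) //; apply: onW_bij.
rewrite -(big_mkord xpredT (fun i => i)) bin2_sum.
by have := bin_ffact q 2; rewrite ffactnS ffactn1 => <-.
Qed.

Lemma sum_r_cases : T = q * q./2 \/ T = q./2 + q * q./2.-1.
Proof.
have := sum_r; have := half_q_gt0; have := odd_double_half q.
by case: (odd q); rewrite -muln2; [left | right]; nia.
Qed.

Lemma sum_r_eq_mul k : T = q * k -> k = q./2.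
Proof.
have := half_q_gt0; have := half_q_lt; have := q_gt1.
case: sum_r_cases => -> q_gt1 lt_j j_gt0.
  by move/eqP; rewrite eqn_pmul2l ?(ltnW q_gt1) // => /eqP.
by rewrite -[q * k]add0n => /(eq_digits lt_j) [] //; lia.
Qed.

Lemma sum_r_nz : \sum_c r_nz c = T - q./2.
Proof.
rewrite [T](bigD1 0%R) //= r0 addKn [LHS](bigD1 0%R) //= /r_nz eqxx add0n.
by apply: eq_bigr => c ->; rewrite mul1n.
Qed.

Lemma r_le_sum_nz c : (c != 0)%R -> r c <= T - q./2.
Proof. by move=> c0; rewrite -sum_r_nz (bigD1 c) //= /r_nz c0 mul1n leq_addr. Qed.

Lemma r_ratio_inj a b c d : (c != 0)%R -> (d != 0)%R ->
  r (- a / c)%R = r (- b / d)%R -> b = (d / c * a)%R.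
Proof.
move=> c0 d0 /r_inj; rewrite !mulNr => /oppr_inj ac_bd.
by rewrite -mulrA (mulrC c^-1)%R ac_bd mulrC divfK.
Qed.

Lemma r_ratio_eq0 a c : (c != 0)%R -> r (- a / c)%R = 0 -> a = c.
Proof.
move=> c0; rewrite -rN1 => /r_inj; rewrite mulNr => /oppr_inj ac.
by rewrite -(divfK c0 a) ac mul1r.
Qed.

Lemma r_ratio_eq_half a c : (c != 0)%R -> r (- a / c)%R = q./2 -> a = 0%R.
Proof.
move=> c0; rewrite -r0 => /r_inj /eqP; rewrite mulf_eq0 invr_eq0 (negbTE c0) orbF.
by rewrite oppr_eq0 => /eqP.
Qed.

Lemma orth_count_cols (x : 'rV[F]_3) :
  orth_count cols x = q ^ 2 * (x ord0 i2 == 0)%R + root_weight r (x ord0 i0) (x ord0 i2)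
    + q * root_weight r (x ord0 i1) (x ord0 i2)
    + q ^ 2 * root_weight r_nz (x ord0 i0) (x ord0 i1).
Proof.
rewrite /orth_count !count_cat !count_block count_nseq /root_weight !big_distrr /= !addnA.
congr (_ + _ + _ + _); first by rewrite mulmx_col3 !mulr0 !add0r mulr1 mulnC.
- by apply: eq_bigr => c _; rewrite mulmx_col3 mulr1 mulr0 addr0.
- by apply: eq_bigr => c _; rewrite mulmx_col3 mulr1 mulr0 add0r mulnA.
- by apply: eq_bigr => c _; rewrite mulmx_col3 mulr1 mulr0 addr0 mulnA.
Qed.

Lemma size_cols : size cols = q ^ 2 + T + q * T + q ^ 2 * (T - q./2).
Proof.
rewrite -orth_count0 orth_count_cols !mxE eqxx !root_weight_const eqxx sum_r_nz.
by rewrite !mul1n muln1.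
Qed.

Lemma orth_count_affine (x : 'rV[F]_3) : (x ord0 i2 != 0)%R ->
  orth_count cols x = r (- x ord0 i0 / x ord0 i2)%R
    + q * (r (- x ord0 i1 / x ord0 i2)%R + q * root_weight r_nz (x ord0 i0) (x ord0 i1)).
Proof.
by move=> x2; rewrite orth_count_cols !(root_weight_unit _ _ x2) (negbTE x2); lia.
Qed.

Lemma orth_count_infinity (x : 'rV[F]_3) : x ord0 i2 = 0%R -> x != 0%R ->
  [\/ [/\ x ord0 i0 = 0%R, x ord0 i1 != 0%R & orth_count cols x = q ^ 2 + T],
      [/\ x ord0 i0 != 0%R, x ord0 i1 = 0%R & orth_count cols x = q ^ 2 + q * T]
    | [/\ x ord0 i0 != 0%R, x ord0 i1 != 0%R
        & orth_count cols x = q ^ 2 * (r (- x ord0 i0 / x ord0 i1)%R).+1]].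
Proof.
move=> x2 x_n0; rewrite orth_count_cols x2 eqxx !root_weight_const.
have [x0 | x0] := eqVneq (x ord0 i0) 0%R; have [x1 | x1] := eqVneq (x ord0 i1) 0%R.
- case/eqP: x_n0; rewrite -(scale0r x).
  by apply: row3_scale; rewrite mul0r ?x0 ?x1 ?x2.
- constructor 1; split=> //.
  by rewrite (root_weight_unit _ _ x1) x0 oppr0 mul0r /r_nz eqxx; lia.
- by constructor 2; split=> //; rewrite x1 root_weight_const (negbTE x0); lia.
- constructor 3; split=> //; rewrite (root_weight_unit _ _ x1) /r_nz.
  by rewrite mulf_eq0 oppr_eq0 invr_eq0 (negbTE x0) (negbTE x1); lia.
Qed.

Lemma orth_count_lt_size (x : 'rV[F]_3) : x != 0%R -> orth_count cols x < size cols.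
Proof.
move=> x_n0; have := q_gt1; have := half_q_gt0; have := sum_r; rewrite size_cols.
have [x2 | x2] := eqVneq (x ord0 i2) 0%R.
  case: (orth_count_infinity x2 x_n0) => [[_ _ ->]|[_ _ ->]|[x0 x1 ->]]; try nia.
  have := r_le_sum_nz (_ : (- x ord0 i0 / x ord0 i1 != 0)%R).
  by rewrite mulf_eq0 oppr_eq0 invr_eq0 (negbTE x0) (negbTE x1) => /(_ isT); nia.
rewrite orth_count_affine //; have := root_weight_le r_nz (x ord0 i0) (x ord0 i1).
have := r_lt (- x ord0 i0 / x ord0 i2)%R; have := r_lt (- x ord0 i1 / x ord0 i2)%R.
by rewrite sum_r_nz; nia.
Qed.

(* The two lowest base-q digits of the point count of a line through (0:0:1); an
   affine line with the same low digits has high digit 0. *)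
Definition infinity_digits : seq (nat * nat) :=
  [:: (0, 0); (0, q./2); (q./2, q./2.-1)].

Lemma infinity_digits_lt a b : (a, b) \in infinity_digits -> a < q /\ b < q.
Proof.
have := half_q_lt; have := q_gt1.
by rewrite !inE !xpair_eqE => ? ? /or3P [] /andP [/eqP -> /eqP ->]; split; lia.
Qed.

Lemma orth_count_infinity_digits (y : 'rV[F]_3) : y ord0 i2 = 0%R -> y != 0%R ->
  exists a b c, [/\ (a, b) \in infinity_digits, 0 < c
    & orth_count cols y = a + q * (b + q * c)].
Proof.
move=> y2 y_n0; have := half_q_gt0; rewrite /infinity_digits.
case: (orth_count_infinity y2 y_n0) => [[_ _ ->]|[_ _ ->]|[_ _ ->]] j_gt0.
- case: sum_r_cases => ->.
  + by exists 0, q./2, 1; split; rewrite ?inE ?eqxx ?orbT //; nia.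
  + by exists q./2, q./2.-1, 1; split; rewrite ?inE ?eqxx ?orbT //; nia.
- case: sum_r_cases => ->.
  + by exists 0, 0, q./2.+1; split; rewrite ?inE ?eqxx ?orbT //; nia.
  + by exists 0, q./2, q./2; split; rewrite ?inE ?eqxx ?orbT //; nia.
- by exists 0, 0, (r (- y ord0 i0 / y ord0 i1)%R).+1; split; rewrite ?inE ?eqxx //; nia.
Qed.

Lemma root_weight_infinity_digits (x : 'rV[F]_3) : (x ord0 i2 != 0)%R ->
  (r (- x ord0 i0 / x ord0 i2)%R, r (- x ord0 i1 / x ord0 i2)%R) \in infinity_digits ->
  root_weight r_nz (x ord0 i0) (x ord0 i1) = 0.
Proof.
move=> x2; rewrite !inE !xpair_eqE => /or3P [] /andP [/eqP ra /eqP rb].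
- rewrite (r_ratio_eq0 x2 ra) (r_ratio_eq0 x2 rb) root_weight_unit //.
  by rewrite mulNr divff // /r_nz rN1 muln0.
- by rewrite (r_ratio_eq_half x2 rb) root_weight_const (r_ratio_eq0 x2 ra) (negbTE x2).
- have x1 : (x ord0 i1 != 0)%R.
    by apply: contra_eqN rb => /eqP ->; rewrite oppr0 mul0r r0; have := half_q_gt0; lia.
  by rewrite (r_ratio_eq_half x2 ra) root_weight_unit // oppr0 mul0r /r_nz eqxx.
Qed.

Lemma orth_count_affine_neq_infinity (x y : 'rV[F]_3) :
  (x ord0 i2 != 0)%R -> y ord0 i2 = 0%R -> y != 0%R ->
  orth_count cols x != orth_count cols y.
Proof.
move=> x2 y2 y_n0; have [a [b [c [ab c_gt0 ->]]]] := orth_count_infinity_digits y2 y_n0.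
have [a_lt b_lt] := infinity_digits_lt ab.
rewrite orth_count_affine //; apply/eqP => /eq_digits3 [] //; try exact: r_lt.
by move=> ra rb rc; move: c_gt0; rewrite -rc root_weight_infinity_digits ?ra ?rb.
Qed.

Lemma affine_proportional (x y : 'rV[F]_3) : (x ord0 i2 != 0)%R -> (y ord0 i2 != 0)%R ->
  orth_count cols x = orth_count cols y -> exists l, y = (l *: x)%R.
Proof.
move=> x2 y2; rewrite !orth_count_affine // => /eq_digits3 [] // ra rb _.
exists (y ord0 i2 / x ord0 i2)%R; apply: row3_scale; rewrite ?divfK //.
  exact: r_ratio_inj ra.
exact: r_ratio_inj rb.
Qed.

Lemma infinity_proportional (x y : 'rV[F]_3) : x ord0 i2 = 0%R -> y ord0 i2 = 0%R ->
  x != 0%R -> y != 0%R -> orth_count cols x = orth_count cols y -> exists l, y = (l *: x)%R.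
Proof.
move=> x2 y2 x_n0 y_n0.
have T_neq_qT : q ^ 2 + T <> q ^ 2 + q * T by have := sum_r; have := q_gt1; nia.
have T_neq k : q ^ 2 + T <> q ^ 2 * k.+1.
  by have := sum_r; have := q_gt1; case: k => [|k]; nia.
have qT_neq a b : (a != 0)%R -> (b != 0)%R -> q ^ 2 + q * T <> q ^ 2 * (r (- a / b)%R).+1.
  move=> a0 b0 /eqP; rewrite mulnSr addnC eqn_add2r expnS -mulnA eqn_pmul2l.
    by move=> /eqP/sum_r_eq_mul/(r_ratio_eq_half b0)/eqP; rewrite (negbTE a0).
  by rewrite (ltn_trans _ q_gt1).
case: (orth_count_infinity x2 x_n0) => [[x0 x1 ->]|[x0 x1 ->]|[x0 x1 ->]];
case: (orth_count_infinity y2 y_n0) => [[y0 y1 ->]|[y0 y1 ->]|[y0 y1 ->]] //;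
  try by [move/T_neq_qT | move/esym/T_neq_qT | move/T_neq | move/esym/T_neq
         | move/(qT_neq _ _ y0 y1) | move/esym/(qT_neq _ _ x0 x1)].
- exists (y ord0 i1 / x ord0 i1)%R.
  by apply: row3_scale; rewrite ?divfK ?x0 ?y0 ?x2 ?y2 ?mulr0.
- exists (y ord0 i0 / x ord0 i0)%R.
  by apply: row3_scale; rewrite ?divfK ?x1 ?y1 ?x2 ?y2 ?mulr0.
- move/eqP; rewrite eqn_pmul2l ?expn_gt0 ?(ltn_trans _ q_gt1) // eqSS => /eqP r_eq.
  exists (y ord0 i1 / x ord0 i1)%R.
  by apply: row3_scale; rewrite ?divfK ?x2 ?y2 ?mulr0 //; apply: r_ratio_inj r_eq.
Qed.

Lemma orth_count_cols_proportional (x y : 'rV[F]_3) : x != 0%R -> y != 0%R ->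
  orth_count cols x = orth_count cols y -> exists l, y = (l *: x)%R.
Proof.
move=> x_n0 y_n0 eq_xy.
have [x2 | x2] := eqVneq (x ord0 i2) 0%R; have [y2 | y2] := eqVneq (y ord0 i2) 0%R.
- exact: infinity_proportional eq_xy.
- by move/eqP: (orth_count_affine_neq_infinity y2 x2 x_n0); rewrite eq_xy.
- by move/eqP: (orth_count_affine_neq_infinity x2 y2 y_n0).
- exact: affine_proportional eq_xy.
Qed.

Lemma cols_neq0 : 0%R \notin cols.
Proof.
apply/negP; rewrite !mem_cat => /or4P [].
- by rewrite mem_nseq eq_sym col3_eq0 oner_eq0 !andbF.
- all: by case/flatten_mapP => c _; rewrite mem_nseq eq_sym col3_eq0 oner_eq0 ?andbF.
Qed.

Lemma gencode_cols_MWS :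
  [/\ \dim (gencode cols) = 3, nondeg_code (gencode cols), MWS (gencode cols)
    & 2 * size cols <= (q - 1) * (q ^ 3 + q ^ 2 + q)].
Proof.
split.
- exact/dim_gencode/orth_count_lt_size.
- exact/nondeg_gencode/cols_neq0.
- exact/MWS_gencode/orth_count_cols_proportional.
- by rewrite size_cols; have := sum_r; have := half_q_gt0; have := q_gt1; nia.
Qed.

End Construction.

Unset Implicit Arguments.

Theorem mainTheorem14 (F : finFieldType) :
  let q := #|F| in
  exists (n : nat) (C : {vspace 'rV[F]_n}),
    [/\ \dim C = 3%N, nondeg_code C, MWS C
      & (2 * n <= (q - 1) * (q ^ 3 + q ^ 2 + q))%N].
Proof.
move=> q; have q_gt0 : 0 < q := ltnW (q_gt1 F).
have zero_neqN1 : (0 != -1 :> F)%R by rewrite eq_sym oppr_eq0 oner_eq0.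
have half_neq0 : Ordinal (half_q_lt F) != Ordinal q_gt0.
  by rewrite -val_eqE /= -lt0n half_q_gt0.
have [f [f_inj f0 fN1]] := exists_injection_with_values zero_neqN1 half_neq0.
exists (size (cols (fun c => val (f c)))), (gencode (cols (fun c => val (f c)))).
apply: gencode_cols_MWS => [a b /val_inj/f_inj | c | |] //; first exact: ltn_ord.
- by rewrite f0.
- by rewrite fN1.
Qed.
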